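(* Let $G=(V,E)$ be a finite perfect graph with vertex cost function $w:V\to\mathbb{Q}_+$, and consider the investment management game on $G$ (defined in the context). A function $y:\mathcal{M}\to\mathbb{Q}_+$ on the set $\mathcal{M}$ of maximal cliques of $G$ is a core imputation of this game if and only if $y$ is an optimal solution of the linear program $$ \text{minimize } \sum_{Q\in\mathcal{M}} y_Q \quad\text{subject to}\quad \sum_{Q\in\mathcal{M}:\, v\in Q} y_Q \ge w_v \ \ \forall v\in V,\qquad y_Q\ge 0\ \ \forall Q\in\mathcal{M}. $$
   Context: A graph $G$ is perfect if for every $S\subseteq V$ the induced subgraph $G(S)$ satisfies $\omega(G(S))=\chi(G(S))$ (clique number equals chromatic number). A stable (independent) set is a set of pairwise non-adjacent vertices. The investment management game on $G$ with costs $w$: vertices are assets, and each maximal clique of $G$ is an investment firm; $\mathcal{M}$ denotes the set of maximal cliques. Every subset $S\subseteq V$ is a scenario, and $\mathrm{cost}(S)$ is the maximum of $\sum_{v\in I} w_v$ over stable sets $I$ of the induced subgraph $G(S)$. The total money is $T=\mathrm{cost}(V)$. An imputation is a function $y:\mathcal{M}\to\mathbb{Q}_+$ with $\sum_{Q\in\mathcal{M}} y_Q = T$. For a scenario $S$, $\mathrm{money}(S)=\sum_{Q\in\mathcal{M}:\, Q\cap S\neq\emptyset} y_Q$. An imputation $y$ is in the core (is a core imputation) if $\mathrm{money}(S)\ge \mathrm{cost}(S)$ for every $S\subseteq V$. *)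

From HB Require Import structures.
From mathcomp Require Import all_boot all_order all_algebra.
Set Implicit Arguments. Unset Strict Implicit. Unset Printing Implicit Defensive.
Import Order.TTheory GRing.Theory Num.Theory.
Local Open Scope ring_scope.

Section Graph.
Variables (T : finType) (e : rel T).

(* simple graph: e symmetric and irreflexive (hypotheses of the theorem) *)

Definition clique (K : {set T}) : bool :=
  [forall x in K, forall y in K, (x != y) ==> e x y].

Definition stable (I : {set T}) : bool :=
  [forall x in I, forall y in I, ~~ e x y].

Definition omega (S : {set T}) : nat :=
  \max_(K : {set T} | clique K && (K \subset S)) #|K|.

Definition colorable (S : {set T}) (k : nat) : bool :=
  [exists f : {ffun T -> 'I_(#|T|.+1)},
     [forall x in S, (f x < k)%N] &&
     [forall x in S, forall y in S, e x y ==> (f x != f y)]].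

(* chromatic number of G(S): least k such that G(S) is k-colourable
   (G(S) is always #|T|-colourable, so the bound #|T| is never spurious) *)
Definition chi (S : {set T}) : nat :=
  \big[minn/#|T|]_(k < #|T|.+1 | colorable S k) (k : nat).

Definition perfect : Prop := forall S : {set T}, omega S = chi S.

Definition maxclique (Q : {set T}) : bool :=
  clique Q && [forall v, (v \notin Q) ==> ~~ clique (v |: Q)].

Definition MC := {Q : {set T} | maxclique Q}.

Variable w : T -> rat.

Definition cost (S : {set T}) : rat :=
  \big[Num.max/0]_(I : {set T} | stable I && (I \subset S)) \sum_(v in I) w v.

Definition total : rat := cost [set: T].

Definition money (y : MC -> rat) (S : {set T}) : rat :=
  \sum_(Q : MC | val Q :&: S != set0) y Q.

Definition imputation (y : MC -> rat) : Prop :=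
  (forall Q, 0 <= y Q) /\ \sum_(Q : MC) y Q = total.

Definition core_imputation (y : MC -> rat) : Prop :=
  imputation y /\ forall S : {set T}, cost S <= money y S.

Definition lp_feasible (y : MC -> rat) : Prop :=
  (forall Q, 0 <= y Q) /\ forall v : T, w v <= \sum_(Q : MC | v \in val Q) y Q.

Definition lp_optimal (y : MC -> rat) : Prop :=
  lp_feasible y /\
  forall z : MC -> rat, lp_feasible z -> \sum_(Q : MC) y Q <= \sum_(Q : MC) z Q.

End Graph.

From Pilot Require Import Defs.
From HB Require Import structures.
From mathcomp Require Import all_boot all_order all_algebra.
Import Order.TTheory GRing.Theory Num.Theory.
Set Implicit Arguments. Unset Strict Implicit. Unset Printing Implicit Defensive.

(* Every LP-feasible [z] pays for every scenario: a maximal clique meets a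
   stable set in at most one vertex, so [cost S <= money z S].  Hence a core
   imputation (feasible, of value [cost V]) is LP-optimal, and an optimal [y]
   satisfies every core inequality; what is left is [sum y <= cost V], i.e.
   strong duality with an integral dual solution.  For a perfect graph this is
   Lovász's replication argument: every multiplicity vector [m] is covered by
   [max_clique_weight m] stable sets; counting then yields a clique meeting
   every maximum-weight stable set, and peeling off such cliques covers any
   integral weighting [W] by [max_stable_weight W] cliques.  Clearing the
   denominators of [w] and enlarging the cliques to maximal ones gives a
   feasible [z] of value at most [cost V]. *)

Lemma bigmax_attained (I : finType) (P : pred I) (F : I -> nat) i0 :
  P i0 -> exists2 i, P i & \max_(j | P j) F j = F i.
Proof.
move=> Pi0; case: (arg_maxnP F Pi0) => i Pi maxFi; exists i => //.
by apply/eqP; rewrite eqn_leq leq_bigmax_cond // andbT; apply/bigmax_leqP.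
Qed.

Section Weights.
Variables (T : finType) (e : rel T).

Definition nweight (m : T -> nat) (A : {set T}) : nat := \sum_(x in A) m x.

Definition max_clique_weight (m : T -> nat) : nat :=
  \max_(K | clique e K) nweight m K.

Definition max_stable_weight (m : T -> nat) : nat :=
  \max_(I | stable e I) nweight m I.

Definition coverage (L : seq {set T}) (x : T) : nat := count (fun A : {set T} => x \in A) L.

Definition covers (L : seq {set T}) (m : T -> nat) : Prop :=
  forall x, m x <= coverage L x.

Definition decr (m : T -> nat) (A : {set T}) (x : T) : nat := m x - (x \in A).

Lemma leq_nweight (m1 m2 : T -> nat) (A : {set T}) :
  (forall x, x \in A -> m1 x <= m2 x) -> nweight m1 A <= nweight m2 A.
Proof. exact: leq_sum. Qed.

Lemma leq_nweight_decr (m : T -> nat) (A B : {set T}) : nweight (decr m A) B <= nweight m B.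
Proof. by apply: leq_nweight => x _; apply: leq_subr. Qed.

Lemma nweight_decr_lt (m : T -> nat) (A B : {set T}) x :
  x \in A -> x \in B -> 0 < m x -> nweight (decr m A) B < nweight m B.
Proof.
move=> xA xB mx; rewrite /nweight (bigD1 x) // [X in _ < X](bigD1 x) //=.
rewrite -addSn leq_add ?leq_sum // => [|y _]; last exact: leq_subr.
by rewrite /decr xA subn1 prednK.
Qed.

Lemma sum_mul_mem (m : T -> nat) (A : {set T}) : \sum_x m x * (x \in A) = nweight m A.
Proof.
rewrite /nweight [RHS]big_mkcond; apply: eq_bigr => x _.
by case: (x \in A); rewrite ?muln1 ?muln0.
Qed.

Lemma sum_mem_card (A B : {set T}) : \sum_(x in A) (x \in B) = #|A :&: B|.
Proof.
rewrite -sum1_card [LHS]big_mkcond [RHS]big_mkcond; apply: eq_bigr => x _.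
by rewrite inE; case: (x \in A); case: (x \in B).
Qed.

Lemma coverage_rem (L : seq {set T}) (A : {set T}) x :
  A \in L -> coverage L x = (x \in A) + coverage (rem A L) x.
Proof. by move=> AL; rewrite /coverage (permP (perm_to_rem AL)). Qed.

Lemma stable0 : stable e set0.
Proof. by apply/forallP => x; rewrite inE. Qed.

Lemma clique0 : clique e set0.
Proof. by apply/forallP => x; rewrite inE. Qed.

Lemma stableS (I J : {set T}) : J \subset I -> stable e I -> stable e J.
Proof.
move=> /subsetP JI /forall_inP sI; apply/forall_inP => x xJ.
by apply/forall_inP => y yJ; have /forall_inP := sI x (JI x xJ); apply; apply: JI.
Qed.

Lemma clique_stable_meet (K I : {set T}) : clique e K -> stable e I -> #|K :&: I| <= 1.
Proof.
move=> /forall_inP cK /forall_inP sI; rewrite leqNgt.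
apply/card_gt1P => -[x [y [/setIP [xK xI] /setIP [yK yI] xy]]].
have /forall_inP/(_ y yK) := cK x xK; rewrite xy /= => exy.
by have /forall_inP/(_ y yI) := sI x xI; rewrite exy.
Qed.

Lemma sum_coverage_clique (L : seq {set T}) (K : {set T}) :
  all (stable e) L -> clique e K -> \sum_(x in K) coverage L x <= size L.
Proof.
move=> + cK; elim: L => [|I L IH] /=; first by rewrite big1.
case/andP=> sI /IH {}IH; rewrite big_split /= addnC -addn1 leq_add //.
by rewrite sum_mem_card clique_stable_meet.
Qed.

Lemma weighted_coverage_stable (W : T -> nat) (L : seq {set T}) : all (stable e) L ->
  \sum_x W x * coverage L x <= size L * max_stable_weight W.
Proof.
elim: L => [|I L IH] /=; first by rewrite big1 // => x _; rewrite muln0.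
case/andP=> sI /IH {}IH; rewrite mulSn.
under eq_bigr do rewrite mulnDr; rewrite big_split /= sum_mul_mem.
by rewrite leq_add // (leq_bigmax_cond _ sI).
Qed.

Hypothesis e_irr : irreflexive e.

Lemma stable_set1 x : stable e [set x].
Proof.
apply/forall_inP => y /set1P ->; apply/forall_inP => z /set1P ->.
by rewrite e_irr.
Qed.

Lemma leq_max_stable_weight (W : T -> nat) x : W x <= max_stable_weight W.
Proof.
by apply: leq_trans (leq_bigmax_cond _ (stable_set1 x)); rewrite /nweight big_set1.
Qed.

End Weights.

Section Perfect.
Variables (T : finType) (e : rel T).
Hypotheses (e_irr : irreflexive e) (e_perf : perfect e).

Definition stable_coverable (m : T -> nat) (k : nat) : Prop :=
  exists L : seq {set T}, [/\ all (stable e) L, size L <= k & covers L m].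

Lemma colorable_card (S : {set T}) : colorable e S #|T|.
Proof.
apply/existsP; exists [ffun x => widen_ord (leqnSn _) (enum_rank x)].
apply/andP; split; apply/forall_inP => x _; rewrite ffunE //=.
apply/forall_inP => y _; apply/implyP => exy; rewrite !ffunE.
apply: contraTneq exy => /(congr1 val) /= /val_inj /enum_rank_inj ->.
by rewrite e_irr.
Qed.

Lemma chi_colorable (S : {set T}) : colorable e S (chi e S).
Proof.
apply: (big_ind (colorable e S)) => //; first exact: colorable_card.
by move=> a b Ha Hb; case: leqP.
Qed.

Lemma stable_coverable01 (m : T -> nat) :
  (forall x, m x <= 1) -> stable_coverable m (max_clique_weight e m).
Proof.
move=> m1; set S := [set x | 0 < m x].
have := chi_colorable S; rewrite -e_perf => /existsP [f /andP [/forall_inP fS /forall_inP fP]].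
exists [seq [set x in S | val (f x) == c] | c <- iota 0 (omega e S)]; split.
- apply/allP => _ /mapP [c _ ->]; apply/forall_inP => x; rewrite inE => /andP [xS /eqP fx].
  apply/forall_inP => y; rewrite inE => /andP [yS /eqP fy]; apply/negP => exy.
  by have /forall_inP/(_ y yS) := fP x xS; rewrite exy -val_eqE fx fy eqxx.
- rewrite size_map size_iota; apply/bigmax_leqP => K /andP [cK KS].
  apply: leq_trans (leq_bigmax_cond _ cK); rewrite -sum1_card.
  by apply: leq_nweight => x /(subsetP KS); rewrite inE.
- move=> x; case: (posnP (m x)) => [-> //| mx]; apply: leq_trans (m1 x) _.
  have xS : x \in S by rewrite inE.
  rewrite /coverage -has_count; apply/hasP; exists [set y in S | val (f y) == val (f x)].
    by apply/map_f; rewrite mem_iota add0n fS.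
  by rewrite inE xS eqxx.
Qed.

Lemma max_clique_weight_peel (m : T -> nat) x (L : seq {set T}) A k :
  all (stable e) L -> covers L m -> A \in L -> x \in A -> size L <= k ->
  (forall K, clique e K -> x \in K -> nweight m K < k) ->
  max_clique_weight e (decr m (A :\ x)) < k.
Proof.
move=> sL cL AL xA szL heavy; rewrite /max_clique_weight.
have [K cK ->] := bigmax_attained (nweight (decr m (A :\ x))) (clique0 e).
have [xK | xNK] := boolP (x \in K).
  exact: leq_ltn_trans (leq_nweight_decr _ _ _) (heavy K cK xK).
have sL' : all (stable e) (rem A L).
  by move: sL; rewrite (perm_all _ (perm_to_rem AL)) => /andP [].
apply: (@leq_ltn_trans (size (rem A L))).
  apply: leq_trans (sum_coverage_clique sL' cK); apply: leq_nweight => y yK.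
  have yx : y != x by apply: contraNneq xNK => <-.
  by rewrite /decr !inE yx /= leq_subLR -coverage_rem.
rewrite size_rem // (leq_trans _ szL) // ltn_predL -has_predT.
by apply/hasP; exists A.
Qed.

Lemma weighted_colouring (m : T -> nat) : stable_coverable m (max_clique_weight e m).
Proof.
have [n] := ubnP (nweight m setT); elim: n m => // n IH m /ltnSE le_mn.
have [/forallP|] := boolP [forall x, m x <= 1]; first exact: stable_coverable01.
rewrite negb_forall => /existsP [x]; rewrite -ltnNge => mx2.
have mx0 : 0 < m x := ltnW mx2.
pose m' := decr m [set x].
have m'E y : m y = m' y + (y == x).
  by rewrite /m' /decr inE; case: eqP => [->|_]; rewrite ?subn0 ?addn0 ?subnK.
have lt_m' : nweight m' setT < n :=
  leq_trans (nweight_decr_lt (set11 x) (in_setT x) mx0) le_mn.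
have [L [sL szL cL]] := IH m' lt_m'; set k := max_clique_weight e m' in szL.
have le_k : k <= max_clique_weight e m.
  apply/bigmax_leqP => K cK; apply: leq_trans (leq_bigmax_cond _ cK).
  exact: leq_nweight_decr.
(* Either [{x}] can be a new colour class, or the colour class [A] of [x] is
   removed and [m'] minus [A :\ x] is recoloured with fewer colours. *)
have [/existsP [K /and3P [cK xK kK]] | ] :=
  boolP [exists K, [&& clique e K, x \in K & k <= nweight m' K]].
  exists ([set x] :: L); split => /=.
  - by rewrite stable_set1.
  - apply: leq_trans (leq_bigmax_cond _ cK).
    exact: leq_ltn_trans (leq_trans szL kK) (nweight_decr_lt (set11 x) xK mx0).
  - by move=> y; rewrite m'E /coverage /= in_set1 addnC leq_add.
rewrite negb_exists => /forallP light.
have {}light K : clique e K -> x \in K -> nweight m' K < k.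
  by move=> cK xK; have := light K; rewrite cK xK /= -ltnNge.
have /hasP [A AL xA] : has (fun A : {set T} => x \in A) L.
  by rewrite has_count (leq_trans _ (cL x)) // /m' /decr set11 subn_gt0.
have [L2 [sL2 szL2 cL2]] := IH _ (leq_ltn_trans (leq_nweight_decr m' (A :\ x) setT) lt_m').
exists (A :: L2); split => /=.
- by rewrite (allP sL A AL) sL2.
- exact: leq_trans (leq_ltn_trans szL2 (max_clique_weight_peel sL cL AL xA szL light)) le_k.
- move=> y; have := cL2 y; rewrite m'E /decr /coverage /= !inE.
  case: (eqVneq y x) => [->|yx] /=; first by rewrite xA subn0 addn1 add1n ltnS.
  by rewrite addn0 leq_subLR.
Qed.

Lemma no_max_stable_family_avoiding_cliques (W : T -> nat) (S : {set T} -> {set T}) :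
  0 < max_stable_weight e W ->
  ~ (forall K, clique e K ->
      [/\ stable e (S K), nweight W (S K) = max_stable_weight e W & [disjoint S K & K]]).
Proof.
move=> a_gt0 hS.
(* Each of the [N] cliques has [m]-weight below [N], while the [W]-mass of [m]
   is [N * max_stable_weight e W]: too much for fewer than [N] stable sets. *)
pose N := \sum_(K | clique e K) 1.
pose m x := \sum_(K | clique e K) (x \in S K : nat).
have [L [sL szL cL]] := weighted_colouring m.
have mass : \sum_x W x * m x = N * max_stable_weight e W.
  under eq_bigr do rewrite big_distrr /=; rewrite exchange_big big_distrl /=.
  by apply: eq_bigr => K cK; have [_ <- _] := hS K cK; rewrite mul1n sum_mul_mem.
have clique_light K : clique e K -> nweight m K < N.
  move=> cK; rewrite /nweight exchange_big /N (bigD1 K) //= [X in _ < X](bigD1 K) //=.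
  have [_ _ disK] := hS K cK.
  rewrite big1 => [|y yK]; last by rewrite (disjointFl disK yK).
  rewrite add0n add1n ltnS; apply: leq_sum => K' /andP [cK' _].
  by have [sK' _ _] := hS K' cK'; rewrite sum_mem_card (clique_stable_meet cK sK').
have ltN : size L < N.
  apply: leq_ltn_trans szL _; rewrite /max_clique_weight.
  by have [K cK ->] := bigmax_attained (nweight m) (clique0 e); apply: clique_light.
apply/negP: (weighted_coverage_stable W sL); rewrite -ltnNge.
apply: (@leq_trans (\sum_x W x * m x)); first by rewrite mass ltn_pmul2r.
by apply: leq_sum => x _; rewrite leq_mul.
Qed.

Lemma clique_meeting_max_stable (W : T -> nat) : 0 < max_stable_weight e W ->
  exists2 K, clique e K & forall I, stable e I -> nweight W I = max_stable_weight e W ->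
    exists2 y, y \in I :&: K & 0 < W y.
Proof.
move=> a_gt0.
pose avoids K I := [&& stable e I, nweight W I == max_stable_weight e W &
                       [forall y in I :&: K, W y == 0]].
have [/forall_inP avoid | ] := boolP [forall K in clique e, [exists I, avoids K I]].
  exfalso; apply: (@no_max_stable_family_avoiding_cliques W
    (fun K => odflt set0 [pick I | avoids K I] :&: [set y | 0 < W y]) a_gt0) => K cK.
  case: pickP => [I /and3P [sI /eqP wI /forall_inP avK] | noI] /=; last first.
    by have /existsP [I] := avoid K cK; rewrite noI.
  split; first exact: stableS (subsetIl _ _) sI.
    rewrite -wI /nweight big_mkcond [RHS]big_mkcond; apply: eq_bigr => y _.
    by rewrite !inE; case: (y \in I); case: posnP => [->|].
  rewrite disjoints_subset; apply/subsetP => y; rewrite !inE => /andP [yI Wy].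
  by apply: contraTN Wy => yK; rewrite -eqn0Ngt avK // inE yI.
rewrite negb_forall_in => /existsP [K /andP [cK /existsPn noI]]; exists K => // I sI wI.
have := noI I; rewrite /avoids sI wI eqxx /= negb_forall_in.
by case/exists_inP=> y yIK; rewrite -lt0n; exists y.
Qed.

Lemma clique_cover (W : T -> nat) : exists Ks : seq {set T},
  [/\ all (clique e) Ks, size Ks <= max_stable_weight e W & covers Ks W].
Proof.
have [n] := ubnP (nweight W setT); elim: n W => // n IH W /ltnSE le_Wn.
have [a0 | a_gt0] := posnP (max_stable_weight e W).
  by exists [::]; split => // x; rewrite /coverage /= -a0 leq_max_stable_weight.
have [K cK meetK] := clique_meeting_max_stable a_gt0.
have [I0 sI0 /esym maxI0] := bigmax_attained (nweight W) (stable0 e).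
have [y0 /setIP [y0I0 y0K] Wy0] := meetK I0 sI0 maxI0.
have [Ks [cKs szKs cvKs]] :=
  IH (decr W K) (leq_trans (nweight_decr_lt y0K (in_setT y0) Wy0) le_Wn).
have lt_a : max_stable_weight e (decr W K) < max_stable_weight e W.
  rewrite [X in X < _]/max_stable_weight.
  have [I sI ->] := bigmax_attained (nweight (decr W K)) (stable0 e).
  have [maxI | nmaxI] := eqVneq (nweight W I) (max_stable_weight e W).
    by have [y /setIP [yI yK] Wy] := meetK I sI maxI; rewrite -maxI (nweight_decr_lt yK yI).
  apply: leq_ltn_trans (leq_nweight_decr _ _ _) _.
  by rewrite ltn_neqAle nmaxI (leq_bigmax_cond _ sI).
exists (K :: Ks); split => /=.
- by rewrite cK cKs.
- exact: leq_ltn_trans szKs lt_a.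
- by move=> x; rewrite /coverage /= -leq_subLR; apply: cvKs.
Qed.

End Perfect.

Section CoreLP.
Local Open Scope ring_scope.
Variables (T : finType) (e : rel T) (w : T -> rat).

Lemma maxclique_clique (Q : MC e) : clique e (val Q).
Proof. by case/andP: (valP Q). Qed.

Lemma clique_sub_maxclique (K : {set T}) : clique e K -> exists Q : MC e, K \subset val Q.
Proof.
move=> cK; case: (@arg_maxnP _ K (fun Q => clique e Q && (K \subset Q)) (fun Q => #|Q|)).
  by rewrite cK subxx.
move=> Q /andP [cQ KQ] maxQ.
suff mQ : maxclique e Q by exists (exist _ Q mQ).
rewrite /maxclique cQ; apply/forallP => v; apply/implyP => vQ; apply/negP => cvQ.
have := maxQ (v |: Q); rewrite cvQ (subset_trans KQ (subsetUr _ _)) cardsU1 vQ.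
by move=> /(_ isT); rewrite /= add1n ltnn.
Qed.

Lemma maxclique_cover (Ks : seq {set T}) : all (clique e) Ks ->
  exists z : MC e -> nat, (\sum_Q z Q = size Ks)%N /\
    forall v, (coverage Ks v <= \sum_(Q : MC e | v \in val Q) z Q)%N.
Proof.
elim: Ks => [|K Ks IH] /=; first by exists (fun=> 0%N); split => [|v]; rewrite ?big1.
case/andP=> /clique_sub_maxclique [Q KQ] /IH [z [sum_z cov_z]].
exists (fun Q' => z Q' + (Q' == Q))%N; split => [|v].
  by rewrite big_split /= sum_z (bigD1 Q) //= eqxx big1 ?addn0 ?addn1 // => Q' /negbTE ->.
rewrite /coverage /= big_split /= addnC leq_add ?cov_z //.
by case: (boolP (v \in K)) => // /(subsetP KQ) vQ; rewrite (bigD1 Q) //= eqxx.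
Qed.

Lemma rat_common_denominator (f : T -> rat) : (forall v, 0 <= f v) ->
  exists2 d : nat, (0 < d)%N & exists W : T -> nat, forall v, f v = (W v)%:R / d%:R.
Proof.
move=> f_ge0; exists (\prod_u `|denq (f u)|)%N.
  by apply: prodn_gt0 => u; rewrite absz_gt0 denq_neq0.
exists (fun v => `|numq (f v)| * \prod_(u | u != v) `|denq (f u)|)%N => v.
rewrite [(\prod_u _)%N](bigD1 v) //= !natrM -mulf_div divff ?mulr1; last first.
  by rewrite pnatr_eq0 -lt0n prodn_gt0 // => u; rewrite absz_gt0 denq_neq0.
by rewrite !natr_absz !ger0_norm ?numq_ge0 ?(ltW (denq_gt0 _)) // divq_num_den.
Qed.

Lemma stable_le_cost (I S : {set T}) :
  stable e I -> I \subset S -> \sum_(v in I) w v <= cost e w S.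
Proof.
by move=> sI IS; rewrite /cost (bigD1 I) /= ?sI // le_max lexx.
Qed.

Lemma stable_le_money (z : MC e -> rat) (I S : {set T}) :
  lp_feasible w z -> stable e I -> I \subset S -> \sum_(v in I) w v <= money z S.
Proof.
move=> [z_ge0 z_cov] sI IS.
apply: le_trans (_ : \sum_(v in I) \sum_(Q : MC e | v \in val Q) z Q <= _).
  exact: ler_sum.
rewrite (exchange_big_dep predT) //= /money [leRHS]big_mkcond /=; apply: ler_sum => Q _.
under eq_bigl do rewrite -in_setI; rewrite sumr_const.
have [-> | meetIQ] := posnP #|I :&: val Q|; first by rewrite mulr0n; case: ifP; rewrite ?z_ge0.
have /card_gt0P [v /setIP [vI vQ]] := meetIQ.
have -> : val Q :&: S != set0 by apply/set0Pn; exists v; rewrite inE vQ (subsetP IS).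
have -> : #|I :&: val Q| = 1%N.
  apply/eqP; rewrite eqn_leq meetIQ andbT setIC.
  exact: clique_stable_meet (maxclique_clique Q) sI.
by rewrite mulr1n.
Qed.

Lemma cost_le_money (z : MC e -> rat) (S : {set T}) :
  lp_feasible w z -> cost e w S <= money z S.
Proof.
move=> z_feas; apply: bigmax_le => [|I /andP [sI IS]]; last exact: stable_le_money.
by apply: sumr_ge0 => Q _; apply: z_feas.1.
Qed.

Lemma money_le_sum (z : MC e -> rat) (S : {set T}) :
  (forall Q, 0 <= z Q) -> money z S <= \sum_Q z Q.
Proof.
move=> z_ge0; rewrite /money [leRHS](bigID (fun Q : MC e => val Q :&: S != set0)) /=.
by rewrite lerDl sumr_ge0.
Qed.

Lemma money_set1 (z : MC e -> rat) v :
  money z [set v] = \sum_(Q : MC e | v \in val Q) z Q.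
Proof.
apply: eq_bigl => Q; apply/set0Pn/idP => [[u /setIP [uQ /set1P <-]] // | vQ].
by exists v; rewrite inE vQ set11.
Qed.

Hypotheses (e_irr : irreflexive e) (e_perf : perfect e) (w_ge0 : forall v, 0 <= w v).

Lemma lp_feasible_le_total :
  exists2 z : MC e -> rat, lp_feasible w z & \sum_Q z Q <= Defs.total e w.
Proof.
have [d d_gt0 [W wE]] := rat_common_denominator w_ge0.
have [Ks [cKs szKs cvKs]] := clique_cover e_irr e_perf W.
have [n [sum_n cov_n]] := maxclique_cover cKs.
have [I sI maxI] := bigmax_attained (nweight W) (stable0 e).
have d_inv_gt0 : 0 < d%:R^-1 :> rat by rewrite invr_gt0 ltr0n.
exists (fun Q => (n Q)%:R / d%:R).
  split => [Q|v]; first by rewrite divr_ge0.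
  rewrite wE -mulr_suml -natr_sum ler_pM2r // ler_nat.
  exact: leq_trans (cvKs v) (cov_n v).
rewrite -mulr_suml -natr_sum sum_n.
apply: le_trans (_ : (nweight W I)%:R / d%:R <= _).
  by rewrite ler_pM2r // ler_nat -maxI.
rewrite /nweight natr_sum mulr_suml; under eq_bigr do rewrite -wE.
exact: stable_le_cost sI (subsetT I).
Qed.

End CoreLP.

Local Open Scope ring_scope.

Theorem theorem17 (T : finType) (e : rel T)
  (e_sym : symmetric e) (e_irr : irreflexive e)
  (e_perf : perfect e)
  (w : T -> rat) (w_ge0 : forall v, 0 <= w v)
  (y : MC e -> rat) :
  (forall Q, 0 <= y Q) ->
  (core_imputation w y <-> lp_optimal w y).
Proof.
move=> y_ge0; split.
- move=> [[_ sum_y] y_core].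
  have y_feas : lp_feasible w y.
    split=> // v; rewrite -money_set1; apply: le_trans (y_core [set v]).
    by have := stable_le_cost w (stable_set1 e_irr v) (subxx _); rewrite big_set1.
  split=> // z z_feas; rewrite sum_y.
  exact: le_trans (cost_le_money setT z_feas) (money_le_sum _ z_feas.1).
- move=> [y_feas y_opt]; split; last by move=> S; apply: cost_le_money.
  split=> //; apply/eqP; rewrite eq_le; apply/andP; split.
    have [z z_feas sum_z] := lp_feasible_le_total e_irr e_perf w_ge0.
    exact: le_trans (y_opt z z_feas) sum_z.
  exact: le_trans (cost_le_money _ y_feas) (money_le_sum _ y_ge0).
Qed.
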